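(* Let $(X,d)$ be a compact metric space and $F:X\to 2^X$ a continuous, onto set-valued map. The following are equivalent: (a) $F$ has the shadowing property. (b) For every $\varepsilon>0$ there exist $\delta>0$ and $N\in\mathbb N$ such that for every $\delta$-pseudo-orbit $\{x_n\}_{n\ge0}$ of $F$ for which there are points $x_i^N\in F^N(x_i)$ with $d(x_i^N,x_{i+N})<\varepsilon/2$ for all $i\ge0$, the sequence $\{x_{n+N}\}_{n\ge0}$ is $\varepsilon$-shadowed by some $F$-orbit. (c) For every $\varepsilon>0$ there exist $\delta>0$ and $N\in\mathbb N$ such that for every $\delta$-pseudo-orbit $\{x_n\}_{n\ge0}$ of $F$ for which there are points $x_i^N\in F^N(x_i)$ with $d(x_i^N,x_{i+N})<\varepsilon/2$ for all $i\ge0$, the sequence $\{x_n^N\}_{n\ge0}$ is $\varepsilon$-shadowed by some $F$-orbit.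
   Context: $2^X$ is the family of nonempty compact subsets of $X$. $F$ is upper semicontinuous if for every $x$ and open $U\supset F(x)$ there is a neighborhood $V$ of $x$ with $F(y)\subset U$ for $y\in V$; lower semicontinuous if for every $x$ and open $U$ with $F(x)\cap U\ne\emptyset$ there is a neighborhood $V$ of $x$ with $F(y)\cap U\neq\emptyset$ for $y\in V$; continuous if both. $F$ is onto if every $y\in X$ lies in some $F(x)$. For $A\subset X$, $F(A)=\bigcup_{a\in A}F(a)$; $F^1=F$ and $F^{N}(x)=F(F^{N-1}(x))$. A $\delta$-pseudo-orbit of $F$ is $\{x_n\}_{n\ge0}$ with $d(x_{n+1},F(x_n))<\delta$ for all $n$; an $F$-orbit is $(y_n)_{n\ge0}$ with $y_{n+1}\in F(y_n)$; a sequence $\{z_n\}$ is $\varepsilon$-shadowed by the $F$-orbit $(y_n)$ if $d(z_n,y_n)<\varepsilon$ for all $n$. $F$ has the shadowing property if for every $\varepsilon>0$ there is $\delta>0$ such that every $\delta$-pseudo-orbit is $\varepsilon$-shadowed by some $F$-orbit. *)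

From HB Require Import structures.
From mathcomp Require Import all_boot all_order all_algebra.
From mathcomp Require Import all_classical all_reals all_analysis.
Set Implicit Arguments. Unset Strict Implicit. Unset Printing Implicit Defensive.
Import Order.TTheory GRing.Theory Num.Theory.
Local Open Scope classical_set_scope.
Local Open Scope ring_scope.

Section SetValued.
Context {R : realType} {X : metricType R}.

Definition setvalued_map (F : X -> set X) : Prop :=
  forall x, F x !=set0 /\ compact (F x).

Definition usc (F : X -> set X) : Prop :=
  forall x (U : set X), open U -> F x `<=` U -> \forall y \near x, F y `<=` U.

Definition lsc (F : X -> set X) : Prop :=
  forall x (U : set X), open U -> F x `&` U !=set0 ->
    \forall y \near x, F y `&` U !=set0.

Definition sv_continuous (F : X -> set X) : Prop := usc F /\ lsc F.

Definition sv_onto (F : X -> set X) : Prop := forall y, exists x, F x y.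

Definition sv_image (F : X -> set X) (A : set X) : set X :=
  \bigcup_(a in A) F a.

Fixpoint sv_iter (F : X -> set X) (n : nat) (x : X) : set X :=
  match n with
  | O => [set x]
  | S m => sv_image F (sv_iter F m x)
  end.

(* d(x_{n+1}, F(x_n)) < delta, with d(y, A) = inf_{a in A} d(y, a) *)
Definition pseudo_orbit (F : X -> set X) (delta : R) (x : nat -> X) : Prop :=
  forall n, exists2 a, F (x n) a & mdist (x n.+1) a < delta.

Definition orbit (F : X -> set X) (y : nat -> X) : Prop :=
  forall n, F (y n) (y n.+1).

Definition shadowed_by (eps : R) (z y : nat -> X) : Prop :=
  forall n, mdist (z n) (y n) < eps.

Definition eps_shadowed (F : X -> set X) (eps : R) (z : nat -> X) : Prop :=
  exists y, orbit F y /\ shadowed_by eps z y.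

Definition shadowing (F : X -> set X) : Prop :=
  forall eps, 0 < eps -> exists2 delta, 0 < delta &
    forall x, pseudo_orbit F delta x -> eps_shadowed F eps x.

End SetValued.

From HB Require Import structures.
From mathcomp Require Import all_boot all_order all_algebra.
From mathcomp Require Import all_classical all_reals all_analysis.
From mathcomp Require Import lra.
Set Implicit Arguments.
Unset Strict Implicit.
Unset Printing Implicit Defensive.
Import Order.TTheory GRing.Theory Num.Theory.
Local Open Scope classical_set_scope.
Local Open Scope ring_scope.

(* Shadowing gives (b) and (c) with N = 1.  Conversely, a continuous
   compact-valued map on a compact space is uniformly continuous for the
   Hausdorff distance, so along a fine enough pseudo-orbit some point of
   F^N(x_i) automatically lies close to x_(i+N).  As F is onto, every
   pseudo-orbit can be preceded by N points of an exact backward orbit; the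
   tail-shadowing property (b) applied to the extended pseudo-orbit shadows
   the original one.  Under (c) the N-th images x_i^N are close to the tail
   x_(i+N), so shadowing the former shadows the latter, which reduces (c)
   to (b). *)

Section SetValuedShadowing.
Context {R : realType} {X : metricType R} (F : X -> set X).

Definition nbhd_set (e : R) (B : set X) : set X :=
  [set a | exists2 b, B b & mdist a b < e].

Lemma open_mdist_ball (c : X) (e : R) : open [set y | mdist c y < e].
Proof.
rewrite openE => y cy; rewrite /interior; apply/nbhs_ballP.
exists (e - mdist c y); first by rewrite /= subr_gt0.
move=> z; rewrite ballEmdist /= => yz.
by rewrite (le_lt_trans (metric_triangle c y z)) // -ltrBrDl.
Qed.

Lemma open_nbhd_set (e : R) (B : set X) : open (nbhd_set e B).
Proof.
have -> : nbhd_set e B = \bigcup_(b in B) [set a | mdist b a < e].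
  by apply/seteqP; split => a [b Bb ab]; exists b => //=; rewrite metric_sym.
by apply: bigcup_open => b _; exact: open_mdist_ball.
Qed.

Lemma nbhd_set_trans (e1 e2 : R) (A B C : set X) :
  A `<=` nbhd_set e1 B -> B `<=` nbhd_set e2 C -> A `<=` nbhd_set (e1 + e2) C.
Proof.
move=> AB BC a /AB [b /BC [c Cc bc] ab]; exists c => //.
by rewrite (le_lt_trans (metric_triangle a b c)) // ltrD.
Qed.

Lemma usc_nbhd_set (u : X) (e : R) : usc F -> 0 < e ->
  \forall v \near u, F v `<=` nbhd_set e (F u).
Proof.
move=> Fu e0; apply: Fu; first exact: open_nbhd_set.
by move=> a Fua; exists a; rewrite ?mdistxx.
Qed.

Lemma lsc_nbhd_set (u : X) (e : R) : lsc F -> compact (F u) -> 0 < e ->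
  \forall v \near u, F u `<=` nbhd_set e (F v).
Proof.
move=> Fl /compact_near_coveringP cFu e0; apply: cFu => a Fua.
have e20 : 0 < e / 2 by rewrite divr_gt0.
have meet : \forall v \near u, F v `&` [set b | mdist a b < e / 2] !=set0.
  apply: Fl; first exact: open_mdist_ball.
  by exists a; split => //=; rewrite mdistxx.
exists (ball a (e / 2), fun v => F v `&` [set b | mdist a b < e / 2] !=set0).
  by split => //=; exact: nbhsx_ballx.
move=> [a' v] /= [+ [b [Fvb ab]]]; rewrite ballEmdist /= => aa'.
exists b => //; rewrite (le_lt_trans (metric_triangle a' a b)) //.
by rewrite metric_sym (splitr e) ltrD.
Qed.

Lemma sv_continuous_near (u : X) (e : R) : setvalued_map F -> sv_continuous F ->
  0 < e -> exists2 r, 0 < r & forall v v', mdist u v < r -> mdist u v' < r ->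
    F v `<=` nbhd_set e (F v').
Proof.
move=> Fsv [Fu Fl] e0; have e20 : 0 < e / 2 by rewrite divr_gt0.
have /nbhs_ballP [r r0 Hr] : \forall v \near u,
    F v `<=` nbhd_set (e / 2) (F u) /\ F u `<=` nbhd_set (e / 2) (F v).
  by apply: filterI; [exact: usc_nbhd_set | exact: lsc_nbhd_set (Fsv u).2 _].
exists r => // v v' uv uv'; rewrite (splitr e).
have := Hr v; rewrite ballEmdist => /(_ uv) [+ _].
have := Hr v'; rewrite ballEmdist => /(_ uv') [_].
move=> uv'_sub vu_sub; exact: nbhd_set_trans vu_sub uv'_sub.
Qed.

Lemma pseudo_orbit_le (d1 d2 : R) (x : nat -> X) :
  d1 <= d2 -> pseudo_orbit F d1 x -> pseudo_orbit F d2 x.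
Proof.
move=> d12 px n; have [a Fa xa] := px n.
by exists a => //; exact: lt_le_trans d12.
Qed.

Lemma pseudo_orbit_cons (delta : R) (x : nat -> X) : sv_onto F -> 0 < delta ->
  pseudo_orbit F delta x ->
  exists2 z, pseudo_orbit F delta z & forall n, z n.+1 = x n.
Proof.
move=> Fo d0 px; have [y Fy] := Fo (x 0%N).
exists (fun n => if n is m.+1 then x m else y) => // -[|n] /=; last exact: px.
by exists (x 0%N); rewrite ?mdistxx.
Qed.

Lemma pseudo_orbit_prepend (delta : R) (N : nat) (x : nat -> X) : sv_onto F ->
  0 < delta -> pseudo_orbit F delta x ->
  exists2 z, pseudo_orbit F delta z & forall n, z (n + N)%N = x n.
Proof.
move=> Fo d0; elim: N x => [|N IH] x px.
  by exists x => // n; rewrite addn0.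
have [z pz zx] := IH x px; have [z' pz' z'z] := pseudo_orbit_cons Fo d0 pz.
by exists z' => // n; rewrite addnS z'z.
Qed.

Lemma eps_shadowed_shift (eps : R) (N : nat) (x : nat -> X) :
  eps_shadowed F eps x -> eps_shadowed F eps (fun n => x (n + N)%N).
Proof.
move=> [y [oy xy]]; exists (fun n => y (n + N)%N); split => [n|//].
by rewrite addSn; exact: oy.
Qed.

Lemma eps_shadowed_near (e1 e2 eps : R) (z x : nat -> X) :
  (forall n, mdist (z n) (x n) < e1) -> e1 + e2 <= eps ->
  eps_shadowed F e2 x -> eps_shadowed F eps z.
Proof.
move=> zx e12 [y [oy xy]]; exists y; split => // n.
rewrite (le_lt_trans (metric_triangle _ (x n) _)) //.
by rewrite (lt_le_trans _ e12) // ltrD.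
Qed.

Definition iterates_track (N : nat) (c : R) (x xN : nat -> X) :=
  forall i, sv_iter F N (x i) (xN i) /\ mdist (xN i) (x (i + N)%N) < c.

Definition tail_shadowing (tol : R -> R) :=
  forall eps, 0 < eps -> exists2 delta, 0 < delta & exists2 N, (0 < N)%N &
    forall x, pseudo_orbit F delta x ->
    forall xN, iterates_track N (tol eps) x xN ->
      eps_shadowed F eps (fun n => x (n + N)%N).

Definition iterate_shadowing (tol : R -> R) :=
  forall eps, 0 < eps -> exists2 delta, 0 < delta & exists2 N, (0 < N)%N &
    forall x, pseudo_orbit F delta x ->
    forall xN, iterates_track N (tol eps) x xN -> eps_shadowed F eps xN.

Lemma shadowing_tail_shadowing (tol : R -> R) :
  shadowing F -> tail_shadowing tol.
Proof.
move=> sh eps eps0; have [delta d0 Hd] := sh eps eps0.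
by exists delta => //; exists 1%N => // x px xN _; exact/eps_shadowed_shift/Hd.
Qed.

Lemma shadowing_iterate_shadowing :
  shadowing F -> iterate_shadowing (fun eps => eps / 2).
Proof.
move=> sh eps eps0; have e20 : 0 < eps / 2 by rewrite divr_gt0.
have [delta d0 Hd] := sh _ e20.
exists delta => //; exists 1%N => // x px xN xNx.
apply: (eps_shadowed_near (e2 := eps / 2) (fun n => (xNx n).2)).
  by rewrite -splitr.
exact/eps_shadowed_shift/Hd.
Qed.

Lemma iterate_tail_shadowing : iterate_shadowing (fun eps => eps / 2) ->
  tail_shadowing (fun eps => eps / 2 / 2).
Proof.
move=> H eps eps0; have e20 : 0 < eps / 2 by rewrite divr_gt0.
have [delta d0 [N N0 Hd]] := H _ e20.
exists delta => //; exists N => // x px xN xNx.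
apply: (eps_shadowed_near (e1 := eps / 2 / 2) (e2 := eps / 2)) (Hd x px xN xNx).
  by move=> n; rewrite metric_sym; exact: (xNx n).2.
lra.
Qed.

Section CompactSpace.
Hypotheses (cX : compact [set: X]) (Fsv : setvalued_map F).
Hypothesis Fc : sv_continuous F.

Lemma sv_continuous_uniform (e : R) : 0 < e ->
  exists2 eta, 0 < eta &
    forall v v', mdist v v' < eta -> F v `<=` nbhd_set e (F v').
Proof.
move=> e0; pose P eta w := forall v v', mdist w v < eta -> mdist w v' < eta ->
  F v `<=` nbhd_set e (F v').
have Pnear : \forall eta \near 0^'+, [set: X] `<=` P eta.
  move/compact_near_coveringP: cX; apply => u _.
  have [r r0 Hr] := @sv_continuous_near u e Fsv Fc e0.
  have r20 : 0 < r / 2 by rewrite divr_gt0.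
  exists (ball u (r / 2), [set eta | eta < r / 2]).
    by split => /=; [exact: nbhsx_ballx | exact: nbhs_right_lt].
  move=> [w eta] /= [+ etar] v v' wv wv'; rewrite ballEmdist /= => uw.
  apply: Hr; rewrite (le_lt_trans (metric_triangle u w _)) // (splitr r)
    ltrD //; exact: lt_trans etar.
have [eta [Peta eta0]] := filter_ex (filterI Pnear (nbhs_right_gt 0)).
by exists eta => // v v' vv'; apply: (Peta v I); rewrite ?mdistxx.
Qed.

Lemma pseudo_orbit_iter_approx (N : nat) (c : R) : 0 < c ->
  exists2 delta, 0 < delta & forall x, pseudo_orbit F delta x ->
    forall i, exists p, sv_iter F N (x i) p /\ mdist p (x (i + N)%N) < c.
Proof.
elim: N c => [|N IH] c c0.
  by exists 1 => // x _ i; exists (x i); rewrite addn0 mdistxx.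
have c20 : 0 < c / 2 by rewrite divr_gt0.
have [eta eta0 Feta] := sv_continuous_uniform c20.
have [d d0 Hd] := IH eta eta0.
exists (Num.min d (c / 2)) => [|x px i]; first by rewrite lt_min d0 c20.
have [min_d min_c] : Num.min d (c / 2) <= d /\ Num.min d (c / 2) <= c / 2.
  by rewrite !ge_min !lexx orbT.
have [q [Fq qx]] := Hd x (pseudo_orbit_le min_d px) i.
have [a Fa xa] := px (i + N)%N.
have [b Fb ab] : nbhd_set (c / 2) (F q) a by apply: Feta Fa; rewrite metric_sym.
exists b; split; first by exists q.
rewrite addnS (le_lt_trans (metric_triangle _ a _)) // (splitr c) ltrD //.
  by rewrite metric_sym.
by rewrite metric_sym (lt_le_trans xa).
Qed.

Lemma tail_shadowing_shadowing (tol : R -> R) : sv_onto F ->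
  (forall eps, 0 < eps -> 0 < tol eps) -> tail_shadowing tol -> shadowing F.
Proof.
move=> Fo tol0 H eps eps0.
have [delta d0 [N _ Hd]] := H eps eps0.
have [d1 d10 Hd1] := pseudo_orbit_iter_approx N (tol0 eps eps0).
have min0 : 0 < Num.min delta d1 by rewrite lt_min d0 d10.
have [min_delta min_d1] : Num.min delta d1 <= delta /\ Num.min delta d1 <= d1.
  by rewrite !ge_min !lexx orbT.
exists (Num.min delta d1) => // x px.
have [z pz zx] := pseudo_orbit_prepend N Fo min0 px.
have [zN zNz] := choice (Hd1 z (pseudo_orbit_le min_d1 pz)).
have := Hd z (pseudo_orbit_le min_delta pz) zN zNz.
by congr eps_shadowed; apply/funext => n; rewrite zx.
Qed.

End CompactSpace.
End SetValuedShadowing.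

Theorem proposition3p19 (R : realType) (X : metricType R) (F : X -> set X) :
  compact [set: X] -> setvalued_map F -> sv_continuous F -> sv_onto F ->
  (shadowing F <->
   (forall eps : R, 0 < eps -> exists2 delta : R, 0 < delta & exists2 N : nat, (0 < N)%N &
      forall x : nat -> X, pseudo_orbit F delta x ->
      forall xN : nat -> X,
        (forall i, sv_iter F N (x i) (xN i) /\ mdist (xN i) (x (i + N)%N) < eps / 2) ->
        eps_shadowed F eps (fun n => x (n + N)%N)))
  /\
  (shadowing F <->
   (forall eps : R, 0 < eps -> exists2 delta : R, 0 < delta & exists2 N : nat, (0 < N)%N &
      forall x : nat -> X, pseudo_orbit F delta x ->
      forall xN : nat -> X,
        (forall i, sv_iter F N (x i) (xN i) /\ mdist (xN i) (x (i + N)%N) < eps / 2) ->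
        eps_shadowed F eps xN)).
Proof.
move=> cX Fsv Fc Fo.
have tails := tail_shadowing_shadowing cX Fsv Fc Fo.
split; split.
- exact: (@shadowing_tail_shadowing _ _ _ (fun eps => eps / 2)).
- by apply: tails => eps eps0; rewrite divr_gt0.
- exact: shadowing_iterate_shadowing.
- by move/iterate_tail_shadowing; apply: tails => eps eps0; rewrite !divr_gt0.
Qed.
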